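(* Fix $s,k,g$ and let $S$ be an $(s,k)$-schedule with at most $g$ gaps and $C_{\max}(S)=U_{s,k,g}$. Then $S$ is frugal.
   Context: Time is discrete (slots $[t,t+1)$). There are $n$ jobs, job $j$ with integer processing time $p_j\ge1$, release time $r_j$, deadline $d_j$; jobs are indexed so that $d_1<\dots<d_n$, release times are pairwise distinct, and the instance is feasible. A (partial, preemptive) schedule assigns to each slot at most one job so that each job it schedules receives exactly $p_j$ slots in $[r_j,d_j)$, and has the earliest-deadline property (whenever busy at slot $t$, it runs the released, not yet completed job of smallest deadline among those it schedules). $C_{\max}(S)$ is its completion time. For $s\in\{1,\dots,n\}$, $k\in\{0,\dots,n\}$, an $(s,k)$-schedule is a schedule $S$ with $C_{\max}(S)\le d_k$ scheduling exactly the jobs $j\le k$ with $r_s\le r_j<C_{\max}(S)$; the empty schedule counts, with $C_{\max}=r_s$. Gaps of an $(s,k)$-schedule: maximal idle intervals between its blocks (maximal busy intervals), plus the idle interval from $r_s$ to the first block if nonempty. $U_{s,k,g}$ is the maximum of $C_{\max}(S)$ over $(s,k)$-schedules with at most $g$ gaps. An execution interval of job $k$ in $S$ is an inclusion-maximal interval $[u,v)$ all of whose slots execute $k$. An $(s,k)$-schedule $S$ is frugal if (f1) no job $j\le k$ has $r_j=C_{\max}(S)$, and (f2) if $C_{\max}(S)<d_k$ and $S$ schedules $k$, then for every execution interval $[u,v)$ of $k$ the slot $u-1$ is not idle, and if slot $v$ is idle then $v=C_{\max}(S)$. *)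

From mathcomp Require Import all_boot.
Set Implicit Arguments. Unset Strict Implicit. Unset Printing Implicit Defensive.

(* Jobs are the naturals 1..n; p r d : nat -> nat give processing times,
   release times, deadlines (values at indices outside 1..n are irrelevant).
   Time slots are naturals; slot t is [t,t+1).
   A (partial) schedule is S : nat -> option nat, S t = Some j meaning slot t
   executes job j, S t = None meaning slot t is idle. *)

Section Sched.
Variables (n : nat) (p r d : nat -> nat).

Definition is_job (j : nat) : Prop := 1 <= j <= n.

Definition sched_job (S : nat -> option nat) (j : nat) : Prop :=
  exists t, S t = Some j.

Definition busy (S : nat -> option nat) (t : nat) : Prop := S t <> None.

Definition done_before (S : nat -> option nat) (j t : nat) : nat :=
  \sum_(0 <= t' < t) (S t' == Some j).

(* a (partial, preemptive, earliest-deadline) schedule *)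
Definition schedule (S : nat -> option nat) : Prop :=
  [/\ (forall t j, S t = Some j -> is_job j /\ r j <= t < d j),
      (forall j, sched_job S j -> \sum_(r j <= t < d j) (S t == Some j) = p j)
    & (forall t j i, S t = Some j -> sched_job S i -> r i <= t ->
         done_before S i t < p i -> d j <= d i)].

Definition feasible : Prop :=
  exists S, schedule S /\ forall j, is_job j -> sched_job S j.

Definition cmax_is (s : nat) (S : nat -> option nat) (C : nat) : Prop :=
  (exists t, busy S t /\ C = t.+1 /\ forall t', busy S t' -> t' < C)
  \/ ((forall t, S t = None) /\ C = r s).

Definition sk_schedule (s k : nat) (S : nat -> option nat) (C : nat) : Prop :=
  [/\ schedule S, cmax_is s S C, C <= d k
    & forall j, sched_job S j <-> (1 <= j <= k /\ r s <= r j < C)].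

Definition idle (s : nat) (S : nat -> option nat) (t : nat) : Prop :=
  r s <= t /\ S t = None.

(* number of gaps: each gap (maximal idle interval, either between two blocks
   or from r_s to the first block) is counted by its last slot t, which is
   idle with t+1 busy; all such t lie in [r_s, C). *)
Definition ngaps (s : nat) (S : nat -> option nat) (C : nat) : nat :=
  \sum_(r s <= t < C) ((S t == None) && (S t.+1 != None)).

Definition is_U (s k g u : nat) : Prop :=
  (exists S C, [/\ sk_schedule s k S C, ngaps s S C <= g & C = u])
  /\ (forall S C, sk_schedule s k S C -> ngaps s S C <= g -> C <= u).

Definition exec_interval (S : nat -> option nat) (k u v : nat) : Prop :=
  [/\ u < v, (forall t, u <= t < v -> S t = Some k),
      (0 < u -> S u.-1 <> Some k) & S v <> Some k].

Definition frugal (s k : nat) (S : nat -> option nat) (C : nat) : Prop :=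
  (forall j, 1 <= j <= k -> r j <> C)
  /\ (C < d k -> sched_job S k ->
      forall u v, exec_interval S k u v ->
        (0 < u -> ~ idle s S u.-1) /\ (idle s S v -> v = C)).

End Sched.

From mathcomp Require Import all_boot zify.
Set Implicit Arguments. Unset Strict Implicit. Unset Printing Implicit Defensive.

(* Both frugality conditions follow from the maximality of C = U_{s,k,g}.
   If a job j <= k were released at C, run EDF from C on the jobs released
   at or after C. Comparing with a feasible schedule, the jobs of index <= i
   released at or after any t0 need at most d_i - t0 slots before d_i, so EDF
   meets all deadlines; it stays busy from C up to some C' <= d_k, and
   appending it to S gives an (s,k)-schedule ending at C' > C without new
   gaps. Once no job is released at C, a slot of k adjacent to an idle slot
   can be moved to slot C: this yields an (s,k)-schedule ending at C + 1 whose
   gaps do not increase. *)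

Lemma sum_nat_zero (f : nat -> nat) a b :
  (forall t, a <= t < b -> f t = 0) -> \sum_(a <= t < b) f t = 0.
Proof. by move=> f0; rewrite big1_seq // => t /andP[_]; rewrite mem_index_iota => /f0. Qed.

Lemma sum_nat_support (f : nat -> nat) a b lo hi :
  (forall t, 0 < f t -> lo <= t < hi) -> a <= lo -> lo <= hi -> hi <= b ->
  \sum_(a <= t < b) f t = \sum_(lo <= t < hi) f t.
Proof.
move=> supp alo lohi hib.
rewrite (big_cat_nat (n := lo)) 1?(big_cat_nat (n := hi) (m := lo)) //=; try lia.
rewrite (@sum_nat_zero f a lo) ?(@sum_nat_zero f hi b) ?add0n ?addn0 // => t ht;
  apply/eqP; rewrite -leqn0 leqNgt; apply/negP => /supp; lia.
Qed.

Lemma sum_nat_pred1 a b x : \sum_(a <= t < b) (t == x) = (a <= x < b).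
Proof.
rewrite -mem_index_iota -count_uniq_mem ?iota_uniq // -sum1_count [RHS]big_mkcond /=.
by apply: eq_bigr => t _; case: eqP.
Qed.

Lemma leq_sum_nat_exchange (f g : nat -> nat) a b y z :
  a <= y < b -> a <= z < b ->
  (forall t, a <= t < b -> g t + (t == y) <= f t + (t == z)) ->
  \sum_(a <= t < b) g t <= \sum_(a <= t < b) f t.
Proof.
move=> hy hz gf.
have := sum_nat_pred1 a b y; have := sum_nat_pred1 a b z; rewrite hy hz => ez ey.
rewrite -(leq_add2r 1) -[X in _ + X <= _]ey -[X in _ <= _ + X]ez -!big_split /=.
by rewrite big_nat_cond [X in _ <= X]big_nat_cond; apply: leq_sum => t /andP[/gf].
Qed.

Definition find_first (P : pred nat) (lo c : nat) : option nat :=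
  let i := find P (iota lo c) in if i < c then Some (lo + i) else None.

Lemma find_first_some P lo c m : find_first P lo c = Some m ->
  [/\ P m, lo <= m < lo + c & forall m', lo <= m' < m -> ~~ P m'].
Proof.
rewrite /find_first; case: ltnP => // hi [<-].
have hP : has P (iota lo c) by rewrite has_find size_iota.
split; first by have := nth_find 0 hP; rewrite nth_iota.
  by rewrite leq_addr ltn_add2l.
move=> m' hm'; have := @before_find _ 0 P (iota lo c) (m' - lo).
rewrite nth_iota ?subnKC; [move=> -> //; lia|lia|lia].
Qed.

Lemma find_first_none P lo c : find_first P lo c = None ->
  forall m, lo <= m < lo + c -> ~~ P m.
Proof.
rewrite /find_first; case: ltnP => // hi _ m hm.
have : ~~ has P (iota lo c) by rewrite has_find size_iota -leqNgt.
by move/hasPn; apply; rewrite mem_iota.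
Qed.

Section EDF.
Variables (p r : nat -> nat) (k C : nat).

(* EDF on the jobs 1..k released at or after C: the released job of smallest
   index with remaining work runs, i.e. the earliest deadline when d is
   increasing. *)
Definition edf_pick (R : nat -> nat) (t : nat) : option nat :=
  find_first (fun m => [&& C <= r m, r m <= t & 0 < R m]) 1 k.

Fixpoint edf_rem (t : nat) : nat -> nat :=
  if t is t'.+1 then
    fun m => edf_rem t' m - (edf_pick (edf_rem t') t' == Some m)
  else p.

Definition edf (t : nat) : option nat := edf_pick (edf_rem t) t.

Lemma edf_remS t m : edf_rem t.+1 m = edf_rem t m - (edf t == Some m).
Proof. by []. Qed.

Lemma edf_some t m : edf t = Some m ->
  [/\ 1 <= m <= k, C <= r m <= t & 0 < edf_rem t m].
Proof. by case/find_first_some => /and3P[? ? ?] ? _; split => //; lia. Qed.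

Lemma edf_none t m : edf t = None ->
  1 <= m <= k -> C <= r m <= t -> edf_rem t m = 0.
Proof.
move=> /find_first_none idle hm /andP[hCm hmt]; move: (idle m).
by rewrite hCm hmt /=; lia.
Qed.

Lemma edf_min t a m : edf t = Some a ->
  1 <= m <= k -> C <= r m <= t -> 0 < edf_rem t m -> a <= m.
Proof.
case/find_first_some => _ _ before hm /andP[hCm hmt] pos.
rewrite leqNgt; apply/negP => lt_m_a.
by have := before m ltac:(lia); rewrite hCm hmt pos.
Qed.

Lemma edf_rem_sum t m :
  edf_rem t m + \sum_(0 <= t' < t) (edf t' == Some m) = p m.
Proof.
elim: t => [|t IH]; first by rewrite big_geq ?addn0.
rewrite edf_remS big_nat_recr //=.
case: (eqVneq (edf t) (Some m)) => [/edf_some[_ _ pos]|_] /=; lia.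
Qed.

Lemma edf_rem_split t1 t2 m : t1 <= t2 ->
  edf_rem t1 m = edf_rem t2 m + \sum_(t1 <= t < t2) (edf t == Some m).
Proof.
move=> le12; have := edf_rem_sum t1 m; have := edf_rem_sum t2 m.
rewrite (big_cat_nat (n := t1)) //=; lia.
Qed.

Lemma edf_rem_mono t1 t2 m : t1 <= t2 -> edf_rem t2 m <= edf_rem t1 m.
Proof. by move/(edf_rem_split m) ->; apply: leq_addr. Qed.

Lemma edf_rem_unreleased t m : t <= r m -> edf_rem t m = p m.
Proof.
move=> le_t; have := edf_rem_sum t m; rewrite sum_nat_zero ?addn0 // => t' ht'.
by case: eqP => // /edf_some[_ ? _]; lia.
Qed.

Lemma edf_busy_window i D : 1 <= i <= k -> C <= r i <= D -> 0 < edf_rem D i ->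
  exists2 t0, C <= t0 <= r i &
    forall t, t0 <= t < D -> exists2 a, edf t = Some a & (a <= i) && (t0 <= r a).
Proof.
move=> hi /andP[hCi hiD] pos.
pose good t := if edf t is Some a then a <= i else false.
have good_after_release t : r i <= t < D -> good t.
  move=> ht; have pos_t : 0 < edf_rem t i.
    by apply: leq_trans pos (edf_rem_mono _ _); lia.
  rewrite /good; case Et: (edf t) => [a|]; first by apply: (edf_min Et) => //; lia.
  by move: pos_t; rewrite (edf_none Et) //; lia.
pose P t := (C <= t) && all good (index_iota t D).
have P_ri : P (r i).
  by rewrite /P hCi; apply/allP => t; rewrite mem_index_iota; apply: good_after_release.
case: (ex_minnP (ex_intro P _ P_ri)) => t0 /andP[hCt0 /allP all_good] min_t0.
have finished m : 1 <= m <= i -> C <= r m < t0 -> edf_rem t0 m = 0.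
  (* t0 is minimal, so slot t0.-1 is not good: it is idle or runs a job of
     larger index, hence no job m <= i released before t0 is pending there. *)
  move=> hm hr; have bad : ~~ good t0.-1.
    apply/negP => g; suff /min_t0 : P t0.-1 by lia.
    rewrite /P (_ : C <= t0.-1); last by lia.
    apply/allP => t; rewrite mem_index_iota => ht.
    have [->|ne] := eqVneq t t0.-1; first exact: g.
    by apply: all_good; rewrite mem_index_iota; lia.
  suff : edf_rem t0.-1 m = 0 by have := edf_rem_mono m (leq_pred t0); lia.
  move: bad; rewrite /good; case Et: (edf t0.-1) => [a|] bad; last first.
    by apply: (edf_none Et); lia.
  apply/eqP; rewrite -leqn0 leqNgt; apply/negP => pos_m.
  by have := edf_min Et (_ : 1 <= m <= k) (_ : C <= r m <= t0.-1) pos_m; lia.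
exists t0; first by rewrite hCt0 min_t0.
move=> t ht; have := all_good t; rewrite mem_index_iota ht /good => /(_ isT).
case Et: (edf t) => [a|] // le_ai; exists a => //; rewrite le_ai /=.
have [ha /andP[hCa hat] pos_a] := edf_some Et.
rewrite leqNgt; apply/negP => lt_a_t0.
by have := edf_rem_mono a (_ : t0 <= t); rewrite finished //; lia.
Qed.

Lemma edf_window_work i t0 D : t0 <= D ->
  (forall t, t0 <= t < D -> exists2 a, edf t = Some a & (a <= i) && (t0 <= r a)) ->
  D - t0 = \sum_(1 <= m < i.+1 | t0 <= r m) (p m - edf_rem D m).
Proof.
move=> le_t0D busy.
have -> : D - t0 = \sum_(t0 <= t < D) \sum_(1 <= m < i.+1 | t0 <= r m) (edf t == Some m).
  rewrite -[D - t0]muln1 -sum_nat_const_nat; apply: eq_big_nat => t ht.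
  have [a Et /andP[le_ai t0a]] := busy t ht; have [ha _ _] := edf_some Et.
  rewrite big_mkcond /= (eq_bigr (fun m => (m == a) : nat)).
    by rewrite sum_nat_pred1 (_ : 1 <= a < i.+1) //; lia.
  move=> m _; rewrite Et; case: (eqVneq m a) => [->|ne]; first by rewrite t0a eqxx.
  by rewrite (_ : (Some a == Some m) = false) ?if_same //; apply: contraNF ne => /eqP[->].
rewrite exchange_big /=; apply: eq_bigr => m t0m.
by have := edf_rem_split m le_t0D; rewrite edf_rem_unreleased //; lia.
Qed.

End EDF.

Section Feasibility.
Variables (n : nat) (p r d : nat -> nat).
Hypothesis d_incr : forall i j, 1 <= i -> i < j -> j <= n -> d i < d j.

Lemma deadline_mono i j : 1 <= i -> i <= j -> j <= n -> d i <= d j.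
Proof.
by move=> hi; rewrite leq_eqVlt => /predU1P[-> //|lt_ij hj]; apply/ltnW/d_incr.
Qed.

Variable F : nat -> option nat.
Hypotheses (F_sched : schedule n p r d F) (F_all : forall j, is_job n j -> sched_job F j).

Lemma demand_bound i t0 : i <= n ->
  \sum_(1 <= m < i.+1 | t0 <= r m) p m <= d i - t0.
Proof.
case: F_sched => F_win F_work _ hi.
have -> : \sum_(1 <= m < i.+1 | t0 <= r m) p m =
          \sum_(1 <= m < i.+1 | t0 <= r m) \sum_(t0 <= t < d i) (F t == Some m).
  rewrite big_nat_cond [RHS]big_nat_cond; apply: eq_bigr => m /andP[hm t0m].
  have jm : is_job n m by rewrite /is_job; lia.
  have [tm /F_win[_ /andP[hrm hdm]]] := F_all jm.
  rewrite -(F_work m (F_all jm)); apply/esym/sum_nat_support; try lia.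
  - by move=> t; case: eqP => // /F_win[_ ?].
  - by apply: deadline_mono; lia.
rewrite exchange_big /= -[d i - t0]muln1 -sum_nat_const_nat; apply: leq_sum => t _.
case: (F t) => [a|]; last by rewrite big1.
apply: (@leq_trans (\sum_(1 <= m < i.+1) (m == a))); last by rewrite sum_nat_pred1 leq_b1.
rewrite big_mkcond; apply: leq_sum => m _.
by case: ifP => // _; case: eqP => [[->]|] //; rewrite eqxx.
Qed.

Variables (k C : nat).
Hypothesis hk : k <= n.

Lemma edf_meets_deadlines i : 1 <= i <= k -> C <= r i -> edf_rem p r k C (d i) i = 0.
Proof.
move=> hi hCi; apply/eqP; rewrite -leqn0 leqNgt; apply/negP => pos.
have ji : is_job n i by rewrite /is_job; lia.
have [tF] := F_all ji; case: F_sched => F_win _ _ /F_win[_ /andP[hri hdi]].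
have [t0 /andP[hCt0 t0ri] busy] := @edf_busy_window p r k C i (d i) hi ltac:(lia) pos.
have := edf_window_work (i := i) (t0 := t0) (D := d i) ltac:(lia) busy.
have := @demand_bound i t0 ltac:(lia).
have i_pos : 0 < i by case/andP: hi.
rewrite big_mkcond [X in _ = X -> _]big_mkcond !big_nat_recr //= t0ri.
have : \sum_(1 <= m < i) (if t0 <= r m then p m - edf_rem p r k C (d i) m else 0)
       <= \sum_(1 <= m < i) (if t0 <= r m then p m else 0).
  by apply: leq_sum => m _; case: ifP => // _; apply: leq_subr.
have := edf_rem_mono p r k C i (leq0n (d i)); rewrite /=; lia.
Qed.

End Feasibility.

Section SkSchedule.
Variables (n : nat) (p r d : nat -> nat) (s k : nat) (S : nat -> option nat) (C : nat).
Hypothesis hS : sk_schedule n p r d s k S C.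

Lemma sk_slot t j : S t = Some j ->
  [/\ 1 <= j <= k, r s <= r j < C, r j <= t < d j & t < C].
Proof.
case: hS => [[win _ _] cm _ jobs] Stj.
have [_ ht] := win _ _ Stj; have [hj hrj] := (jobs j).1 (ex_intro _ t Stj).
split => //; case: cm => [[t' [_ [-> last]]]|[idle _]]; first by apply: last; rewrite /busy Stj.
by rewrite idle in Stj.
Qed.

Lemma sk_idle_after t : C <= t -> S t = None.
Proof. by case Et: (S t) => [j|] // le_Ct; have [_ _ _] := sk_slot Et; lia. Qed.

Lemma sk_release_le : r s <= C.
Proof.
case: hS => _ [[t [bt [-> _]]]|[_ ->]] // _ _.
by case Et: (S t) bt => [j|] // _; have [_ ? ? _] := sk_slot Et; lia.
Qed.

Lemma sk_last_busy : r s < C -> S C.-1 <> None.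
Proof. by case: hS => _ [[t [bt [-> _]]]|[_ ->]] //; rewrite ltnn. Qed.

Lemma sk_done i t : sched_job S i -> C <= t -> done_before S i t = p i.
Proof.
move=> [ti Sti] le_Ct; case: hS => [[_ work _] _ _ _].
have [_ _ /andP[hri hid] hiC] := sk_slot Sti.
have supp t' : 0 < (S t' == Some i) -> r i <= t' < minn (d i) C.
  by case: eqP => // /sk_slot[_ _ ? ?]; lia.
rewrite /done_before -(work i (ex_intro _ ti Sti)).
by rewrite (sum_nat_support supp) 1?[RHS](sum_nat_support supp); lia.
Qed.

End SkSchedule.

Section Extension.
Variables (n : nat) (p r d : nat -> nat).
Hypotheses (p_pos : forall j, 1 <= j <= n -> 1 <= p j)
  (d_incr : forall i j, 1 <= i -> i < j -> j <= n -> d i < d j).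
Variable F : nat -> option nat.
Hypotheses (F_sched : schedule n p r d F) (F_all : forall j, is_job n j -> sched_job F j).
Variables (s k : nat) (S : nat -> option nat) (C : nat).
Hypotheses (hk : k <= n) (hS : sk_schedule n p r d s k S C).

Local Notation E := (edf p r k C).
Local Notation R := (edf_rem p r k C).

Lemma edf_slot t m : E t = Some m ->
  [/\ 1 <= m <= k, C <= r m <= t, 0 < R t m & t < d m].
Proof.
move=> Etm; have [hm /andP[hCm hmt] pos] := edf_some Etm; split => //; first lia.
rewrite ltnNge; apply/negP => le_dt.
have := edf_rem_mono p r k C m le_dt.
by rewrite (edf_meets_deadlines d_incr F_sched F_all hk hm hCm); lia.
Qed.

Lemma edf_first_idle : (exists2 j, 1 <= j <= k & r j = C) ->
  exists C', [/\ C < C', C' <= d k, E C' = None & forall t, C <= t < C' -> E t <> None].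
Proof.
move=> [j hj rjC].
have idle_dk : E (d k) = None.
  case Ek: (E (d k)) => [m|] //; have [hm _ _] := edf_slot Ek.
  by have := deadline_mono d_incr (_ : 1 <= m) (_ : m <= k) hk; lia.
have le_Cdk : C <= d k by case: hS.
pose P t := (C <= t) && (E t == None).
have P_dk : P (d k) by rewrite /P le_Cdk idle_dk.
case: (ex_minnP (ex_intro P _ P_dk)) => C' /andP[le_CC' /eqP EC'] min_C'.
exists C'; split => //; last 2 first.
- by apply: min_C'.
- by move=> t ht Et; have := min_C' t; rewrite /P Et eqxx; lia.
rewrite ltn_neqAle le_CC' andbT; apply: contra_eqN EC' => /eqP <-.
apply/eqP => EC; have := edf_none EC hj; rewrite rjC leqnn => /(_ isT).
by rewrite edf_rem_unreleased ?rjC //; have := @p_pos j; lia.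
Qed.

Section Concat.
Variable C' : nat.
Hypotheses (lt_CC' : C < C') (le_C'dk : C' <= d k) (idle_C' : E C' = None)
  (busy_E : forall t, C <= t < C' -> E t <> None).

Definition concat_sched (t : nat) : option nat :=
  if t < C then S t else if t < C' then E t else None.

Local Notation S2 := concat_sched.

Lemma edf_finished m : 1 <= m <= k -> C <= r m < C' -> R C' m = 0.
Proof. by move=> hm hr; apply: (edf_none idle_C'); lia. Qed.

Lemma edf_runs m : 1 <= m <= k -> C <= r m < C' ->
  exists2 t, C <= t < C' & E t = Some m.
Proof.
move=> hm hr; have le_rC' : r m <= C' by lia.
have := edf_rem_split p r k C m le_rC'.
rewrite edf_rem_unreleased // edf_finished // add0n => work.
have : \sum_(r m <= t < C') (E t == Some m) != 0 by rewrite -work; have := @p_pos m; lia.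
rewrite sum_nat_seq_neq0 => /hasP[t]; rewrite mem_index_iota eqb0 negbK => ht /eqP Et.
by exists t => //; have [_ ? _ _] := edf_slot Et; lia.
Qed.

Lemma concat_slot t m : S2 t = Some m ->
  (t < C /\ S t = Some m) \/ (C <= t < C' /\ E t = Some m).
Proof.
rewrite /S2; case: ltnP => ht Stm; first by left.
by case: ltnP Stm => // ht' Etm; right; split => //; apply/andP.
Qed.

Lemma concat_old m t : r m < C -> (S2 t == Some m) = (S t == Some m).
Proof.
move=> hm; rewrite /S2; case: ltnP => ht //; rewrite (sk_idle_after hS ht).
case: ltnP => // _; case Et: (E t) => [a|] //; apply/eqP => -[am]; subst a.
by have [_ ? _ _] := edf_slot Et; lia.
Qed.

Lemma concat_new m t : 1 <= m <= k -> C <= r m < C' ->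
  (S2 t == Some m) = (E t == Some m).
Proof.
move=> hm hr; rewrite /S2; case: ltnP => ht.
  rewrite (_ : E t = None); last by case Et: (E t) => [a|] //; have [_ ? _ _] := edf_slot Et; lia.
  by case: eqP => // /(sk_slot hS)[_ ? _ _]; lia.
case: ltnP => ht' //; apply/esym/eqP => /edf_slot[_ _ pos _].
by have := edf_rem_mono p r k C m ht'; rewrite edf_finished //; lia.
Qed.

Lemma concat_jobs m : sched_job S2 m <-> (1 <= m <= k /\ r s <= r m < C').
Proof.
case: hS => _ _ _ jobs; split.
  case=> t /concat_slot[[_ /(sk_slot hS)[? ? _ _]] | [? /edf_slot[? ? _ _]]].
    by split => //; lia.
  by have := sk_release_le hS; split => //; lia.
case=> hm hr; case: (ltnP (r m) C) => hrC.
  have [t Stm] := (jobs m).2 (conj hm (ltac:(lia) : r s <= r m < C)).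
  by exists t; apply/eqP; rewrite concat_old // Stm.
have [t _ Etm] := edf_runs hm (ltac:(lia) : C <= r m < C').
by exists t; apply/eqP; rewrite concat_new ?Etm //; lia.
Qed.

Lemma concat_work m : sched_job S2 m -> \sum_(r m <= t < d m) (S2 t == Some m) = p m.
Proof.
case: hS => [[_ work _] _ _ jobs] /concat_jobs[hm hr].
case: (ltnP (r m) C) => hrC.
  rewrite (eq_bigr (fun t => (S t == Some m) : nat)) => [|t _]; last by rewrite concat_old.
  by apply: work; apply/jobs; split => //; lia.
have hr' : C <= r m < C' by lia.
rewrite (eq_bigr (fun t => (E t == Some m) : nat)) => [|t _]; last by rewrite concat_new.
have [t /andP[_ _] /edf_slot[_ /andP[_ le_rt] _ lt_td]] := edf_runs hm hr'.
have := edf_rem_split p r k C m (ltac:(lia) : r m <= d m).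
by rewrite edf_rem_unreleased // (edf_meets_deadlines d_incr F_sched F_all hk hm) //; lia.
Qed.

Lemma concat_edf t a i : S2 t = Some a -> sched_job S2 i -> r i <= t ->
  done_before S2 i t < p i -> d a <= d i.
Proof.
case: hS => [[_ _ edf_S] _ _ jobs] S2ta /concat_jobs[hi hri] rit; rewrite /done_before.
case: (ltnP (r i) C) => hiC.
  have siS : sched_job S i by apply/jobs; split => //; lia.
  rewrite (eq_bigr (fun t => (S t == Some i) : nat)) => [|t' _]; last by rewrite concat_old.
  case/concat_slot: S2ta => [[_ Sta] | [/andP[le_Ct _] _]]; first exact: edf_S.
  by have := sk_done hS siS le_Ct; rewrite /done_before; lia.
have hri' : C <= r i < C' by lia.
rewrite (eq_bigr (fun t => (E t == Some i) : nat)) => [|t' _]; last by rewrite concat_new.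
have := edf_rem_sum p r k C t i => rem_t pend.
case/concat_slot: S2ta => [[ht _] | [ht Eta]]; first lia.
have [ha _ _ _] := edf_slot Eta.
have le_ai : a <= i by apply: (edf_min Eta hi); lia.
by apply: (deadline_mono d_incr _ le_ai); lia.
Qed.

Lemma concat_schedule : schedule n p r d S2.
Proof.
split; [|exact: concat_work | exact: concat_edf].
case: hS => [[win _ _] _ _ _] t m /concat_slot[[_ /win] // | [_ /edf_slot[? ? _ ?]]].
by split; [rewrite /is_job | ]; lia.
Qed.

Lemma concat_cmax : cmax_is r s S2 C'.
Proof.
left; exists C'.-1; split; [|split; [lia | move=> t]]; rewrite /busy /S2.
  have [le_C_C'1 lt_C'1_C'] : C <= C'.-1 /\ C'.-1 < C' by lia.
  by rewrite ltnNge le_C_C'1 lt_C'1_C' /=; apply/busy_E/andP.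
by case: ltnP => [lt_tC _ | _]; [lia | case: ltnP].
Qed.

Lemma concat_sk_schedule : sk_schedule n p r d s k S2 C'.
Proof. by split; [exact: concat_schedule | exact: concat_cmax | | exact: concat_jobs]. Qed.

Lemma concat_ngaps : ngaps r s S2 C' = ngaps r s S C.
Proof.
have le_rsC := sk_release_le hS.
rewrite /ngaps (big_cat_nat (n := C)) //=; last lia.
rewrite [X in _ + X]sum_nat_zero ?addn0 => [|t /andP[le_Ct lt_tC']]; last first.
  rewrite /S2 ltnNge le_Ct lt_tC' /=.
  by have := @busy_E t; rewrite le_Ct lt_tC' => /(_ isT); case: (E t).
apply: eq_big_nat => t /andP[le_rst lt_tC]; rewrite /S2 lt_tC.
case: ltnP => // le_Ct1; have eC : t.+1 = C by lia.
rewrite eC (sk_idle_after hS (leqnn C)) andbF; have -> : t = C.-1 by lia.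
by case: (S C.-1) (sk_last_busy hS (ltac:(lia) : r s < C)).
Qed.

End Concat.

Lemma release_at_cmax_extends : (exists2 j, 1 <= j <= k & r j = C) ->
  exists S' C', [/\ sk_schedule n p r d s k S' C', C < C' & ngaps r s S' C' = ngaps r s S C].
Proof.
move=> /edf_first_idle[C' [lt_CC' le_C'dk idle_C' busy_E]].
by exists (concat_sched C'), C'; split; [exact: concat_sk_schedule | | exact: concat_ngaps].
Qed.

End Extension.

Definition gap_end (S : nat -> option nat) (t : nat) : bool :=
  (S t == None) && (S t.+1 != None).

Section Shift.
Variables (n : nat) (p r d : nat -> nat) (s k : nat) (S : nat -> option nat) (C : nat).
Hypothesis hS : sk_schedule n p r d s k S C.
Variable x : nat.
Hypothesis Sx : S x = Some k.

Definition shift_to_end (t : nat) : option nat :=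
  if t == x then None else if t == C then Some k else S t.

Local Notation S3 := shift_to_end.

Let x_slot := sk_slot hS Sx.

Lemma shift_other m t : m != k -> (S3 t == Some m) = (S t == Some m).
Proof.
move=> mk; rewrite /S3; case: (eqVneq t x) => [->|_]; last case: (eqVneq t C) => [->|_] //.
  by rewrite Sx; apply/esym; apply: contraNF mk => /eqP[->].
by rewrite (sk_idle_after hS (leqnn C)); apply: contraNF mk => /eqP[->].
Qed.

Lemma shift_k t : (S3 t == Some k) + (t == x) = (S t == Some k) + (t == C).
Proof.
have [_ _ _ lt_xC] := x_slot; rewrite /S3.
case: (eqVneq t x) => [->|tx]; first by rewrite Sx eqxx (ltn_eqF lt_xC).
by case: (eqVneq t C) => [->|tC]; rewrite ?(sk_idle_after hS (leqnn C)) ?eqxx.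
Qed.

Lemma shift_jobs m : sched_job S3 m <-> sched_job S m.
Proof.
have [_ _ _ lt_xC] := x_slot.
case: (eqVneq m k) => [->|mk].
  by split=> _; [exists x | exists C; rewrite /S3 (gtn_eqF lt_xC) eqxx].
split=> -[t Stm]; exists t; apply/eqP.
  by rewrite -(shift_other t mk) Stm.
by rewrite (shift_other t mk) Stm.
Qed.

Lemma shift_ngaps : ngaps r s S3 C.+1 = \sum_(r s <= t < C) gap_end S3 t.
Proof.
have [_ _ _ lt_xC] := x_slot.
rewrite /ngaps big_nat_recr /=; last exact: sk_release_le hS.
by rewrite /S3 (gtn_eqF lt_xC) eqxx addn0.
Qed.

(* Away from x only slot C changes, which could create a gap ending at C.-1;
   it does not, since slot C.-1 is busy. *)
Lemma shift_gap_end t : r s <= t < C -> t != x -> t.+1 != x ->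
  gap_end S3 t <= gap_end S t.
Proof.
move=> /andP[le_rst lt_tC] tx t1x; rewrite /gap_end /S3 (negbTE tx) (negbTE t1x) (ltn_eqF lt_tC).
case: (eqVneq t.+1 C) => [t1C | _] //; have -> : t = C.-1 by lia.
by case: (S C.-1) (sk_last_busy hS (ltac:(lia) : r s < C)).
Qed.

Lemma shift_ngaps_prev : 0 < x -> r s <= x.-1 -> S x.-1 = None ->
  ngaps r s S3 C.+1 <= ngaps r s S C.
Proof.
move=> x_pos le_rs_x1 idle_x1; have [_ _ _ lt_xC] := x_slot.
rewrite shift_ngaps; apply: (@leq_sum_nat_exchange _ _ _ _ x.-1 x); try lia.
move=> t ht; case: (eqVneq t x) => [->|tx].
  by rewrite /gap_end Sx /= (_ : (x == x.-1) = false) ?addn0 ?leq_b1 //; apply/eqP; lia.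
case: (eqVneq t.+1 x) => [t1x|t1x].
  rewrite /gap_end t1x /S3 eqxx Sx andbF /= (_ : t = x.-1) ?eqxx; last lia.
  by rewrite idle_x1.
rewrite (_ : (t == x.-1) = false) ?addn0; last by apply/eqP; lia.
exact: shift_gap_end.
Qed.

Lemma shift_ngaps_next : x.+1 < C -> S x.+1 = None ->
  ngaps r s S3 C.+1 <= ngaps r s S C.
Proof.
move=> lt_x1C idle_x1; have [_ /andP[le_rsk _] /andP[le_kx _] _] := x_slot.
rewrite shift_ngaps; apply: (@leq_sum_nat_exchange _ _ _ _ x x); try lia.
move=> t ht; rewrite leq_add2r; case: (eqVneq t x) => [->|tx].
  by rewrite /gap_end /S3 eqxx (gtn_eqF (ltnSn x)) (ltn_eqF lt_x1C) idle_x1 andbF.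
case: (eqVneq t.+1 x) => [t1x|t1x]; last exact: shift_gap_end.
by rewrite /gap_end /S3 t1x eqxx andbF.
Qed.

Hypotheses (d_incr : forall i j, 1 <= i -> i < j -> j <= n -> d i < d j) (hk : k <= n)
  (no_release : forall j, 1 <= j <= k -> r j <> C) (lt_Cdk : C < d k).

Lemma shift_schedule : schedule n p r d S3.
Proof.
have [hkk _ in_x lt_xC] := x_slot.
have in_C : r k <= C < d k by lia.
case: hS => [[win work edf_S] _ _ _]; split.
- move=> t m; rewrite /S3; case: (eqVneq t x) => // _.
  case: (eqVneq t C) => [-> [<-]|_]; last exact: win.
  by have [jk _] := win _ _ Sx.
- move=> m /shift_jobs sm; case: (eqVneq m k) => [->|mk].
    have := work k (ex_intro _ x Sx).
    have := eq_big_nat 0 addn (fun t _ => shift_k t) (m := r k) (n := d k).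
    by rewrite !big_split /= !sum_nat_pred1 in_x in_C /=; lia.
  by rewrite -(work m sm); apply: eq_bigr => t _; rewrite shift_other.
- move=> t a i S3ta /shift_jobs si rit.
  case: (eqVneq i k) => [->|ik] pend.
    have [t' /(sk_slot hS)[ha _ _ _]] : sched_job S a by apply/shift_jobs; exists t.
    by apply: (deadline_mono d_incr); lia.
  have db : done_before S3 i t = done_before S i t.
    by apply: eq_bigr => t' _; rewrite shift_other.
  rewrite db in pend; move: S3ta; rewrite /S3; case: (eqVneq t x) => // _.
  case: (eqVneq t C) => [eq_tC _ | _ Sta]; last exact: edf_S Sta si rit pend.
  by rewrite eq_tC (sk_done hS si (leqnn C)) ltnn in pend.
Qed.

Lemma shift_sk_schedule : sk_schedule n p r d s k S3 C.+1.
Proof.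
have [hkk _ _ lt_xC] := x_slot.
have S3C : S3 C = Some k by rewrite /S3 (gtn_eqF lt_xC) eqxx.
split; [exact: shift_schedule | | exact: lt_Cdk | move=> m].
- left; exists C; split; [by rewrite /busy S3C | split => // t].
  rewrite /busy /S3; case: (eqVneq t x) => // _; case: (eqVneq t C) => [-> | _] // St.
  by case Et: (S t) St => [j|] // _; have [_ _ _] := sk_slot hS Et; lia.
- case: hS => _ _ _ jobs; rewrite shift_jobs jobs.
  split => -[hm hr]; split => //; first lia.
  by have := no_release hm; lia.
Qed.

End Shift.

Theorem lemma6 (n : nat) (p r d : nat -> nat)
  (p_pos : forall j, 1 <= j <= n -> 1 <= p j)
  (d_incr : forall i j, 1 <= i -> i < j -> j <= n -> d i < d j)
  (r_inj : forall i j, 1 <= i <= n -> 1 <= j <= n -> r i = r j -> i = j)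
  (feas : feasible n p r d)
  (s k g : nat) (hs : 1 <= s <= n) (hk : k <= n)
  (S : nat -> option nat) (C : nat)
  (hS : sk_schedule n p r d s k S C) (hg : ngaps r s S C <= g)
  (u : nat) (hU : is_U n p r d s k g u) (hCu : C = u) :
  frugal r d s k S C.
Proof.
have maximal S' C' : sk_schedule n p r d s k S' C' ->
    ngaps r s S' C' <= ngaps r s S C -> C' <= C.
  by move=> hS' hg'; rewrite hCu; apply: hU.2 hS' (leq_trans hg' hg).
have no_release j : 1 <= j <= k -> r j <> C.
  move=> hj rjC; case: feas => F [F_sched F_all].
  have [S' [C' [hS' lt_CC' hg']]] :=
    release_at_cmax_extends p_pos d_incr F_sched F_all hk hS (ex_intro2 _ _ j hj rjC).
  by have := maximal S' C' hS' (eq_leq hg'); lia.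
split=> // lt_Cdk _ a b [lt_ab in_ab _ _]; split.
  move=> a_pos [le_rs_a1 idle_a1]; have Sa : S a = Some k by apply: in_ab; lia.
  have := maximal _ _ (shift_sk_schedule hS Sa d_incr hk no_release lt_Cdk)
    (shift_ngaps_prev hS Sa a_pos le_rs_a1 idle_a1); lia.
move=> [le_rs_b idle_b]; apply/eqP; apply: contraT => neq_bC.
have Sb1 : S b.-1 = Some k by apply: in_ab; lia.
have [_ _ _ lt_b1C] := sk_slot hS Sb1.
have next_idle : S b.-1.+1 = None by rewrite prednK //; lia.
have next_early : b.-1.+1 < C by rewrite prednK; lia.
by have := maximal _ _ (shift_sk_schedule hS Sb1 d_incr hk no_release lt_Cdk)
  (shift_ngaps_next hS Sb1 next_early next_idle); lia.
Qed.
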